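(* For every integer $s\ge4$, $F_{s,5}(x)=\frac{1}{(s-1)!}\bigl(x^2-(12s-5)x+12s^2\bigr)(x-2s)\prod_{p=5}^{s}(x-p)$ (an empty product equals $1$).
   Context: For an integer $j\ge0$, $\binom{x}{j}=x(x-1)\cdots(x-j+1)/j!$ as a polynomial in $x$, and $\binom{x}{j}=0$ for $j<0$. For integers $s\ge1$, $k\ge1$, the Moser polynomial is $F_{s,k}(x)=\sum_{p=1}^{s}(-1)^{p-1}p^{k-1}\binom{x}{s-p}$. *)

From HB Require Import structures.
From mathcomp Require Import all_boot all_order all_algebra.
Set Implicit Arguments. Unset Strict Implicit. Unset Printing Implicit Defensive.
Import Order.TTheory GRing.Theory Num.Theory.
Local Open Scope ring_scope.

Definition binom_poly (j : nat) : {poly rat} :=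
  ((j`!)%:R)^-1 *: \prod_(i < j) ('X - (i%:R)%:P).

(* Moser polynomial F_{s,k}(x) = sum_{p=1}^s (-1)^(p-1) p^(k-1) binom(x, s-p) *)
Definition moser_poly (s k : nat) : {poly rat} :=
  \sum_(1 <= p < s.+1) ((-1) ^+ (p - 1) * (p%:R) ^+ (k - 1)) *: binom_poly (s - p).

(* Both sides, evaluated at x, satisfy Pascal's rule F_{s+1}(x+1) = F_{s+1}(x) + F_s(x)
   (for the left side because binom(x+1, j+1) = binom(x, j+1) + binom(x, j)), agree at
   s = 4, and agree at x = 0 where the left side is (-1)^(s-1) s^4.  Induction on s and
   then on x shows that they agree at every natural number x, hence as polynomials. *)
From HB Require Import structures.
From mathcomp Require Import all_boot all_order all_algebra.
From mathcomp Require Import ring zify.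
Import Order.TTheory GRing.Theory Num.Theory.
Local Open Scope ring_scope.

Lemma poly_eq_on_nat (R : numDomainType) (p r : {poly R}) :
  (forall n : nat, p.[n%:R] = r.[n%:R]) -> p = r.
Proof.
move=> eq_pr; apply/eqP; rewrite -subr_eq0; apply/eqP.
apply: (@roots_geq_poly_eq0 _ _ [seq i%:R | i <- iota 0 (size (p - r))]).
- by apply/allP => _ /mapP[i _ ->]; rewrite /root hornerD hornerN eq_pr subrr.
- by rewrite map_inj_uniq ?iota_uniq // => a b /eqP; rewrite eqr_nat => /eqP.
- by rewrite size_map size_iota.
Qed.

Section PascalTables.

Variables (R : numDomainType) (f g : nat -> R -> R) (s0 : nat).

Definition pascal_from (h : nat -> R -> R) :=
  forall s x, (s0 <= s)%N -> h s.+1 (x + 1) = h s.+1 x + h s x.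

Hypotheses (pascal_f : pascal_from f) (pascal_g : pascal_from g).
Hypothesis eq_base : forall n : nat, f s0 n%:R = g s0 n%:R.
Hypothesis eq_at0 : forall s, (s0 < s)%N -> f s 0 = g s 0.

Lemma pascal_eq_on_nat s (n : nat) : (s0 <= s)%N -> f s n%:R = g s n%:R.
Proof.
elim: s n => [|s IHs] n; first by rewrite leqn0 => /eqP <-.
rewrite leq_eqVlt => /orP[/eqP <- // | lt_s0s].
elim: n => [|n IHn]; first exact: eq_at0.
by rewrite -natr1 pascal_f // pascal_g // IHn IHs.
Qed.

End PascalTables.

Lemma fact_natr_neq0 j : ((j`!)%:R : rat) != 0.
Proof. by rewrite pnatr_eq0 -lt0n fact_gt0. Qed.

Lemma horner_binom_poly j x :
  (binom_poly j).[x] = (j`!%:R)^-1 * \prod_(i < j) (x - i%:R).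
Proof.
rewrite /binom_poly hornerZ horner_prod; congr (_ * _).
by apply: eq_bigr => i _; rewrite hornerXsubC.
Qed.

Lemma binom_poly0 : binom_poly 0 = 1.
Proof. by rewrite /binom_poly big_ord0 fact0 invr1 scale1r. Qed.

Lemma horner_binom_polyS0 j : (binom_poly j.+1).[0] = 0.
Proof. by rewrite horner_binom_poly big_ord_recl /= subr0 mul0r mulr0. Qed.

Lemma binom_poly_pascal j x :
  (binom_poly j.+1).[x + 1] = (binom_poly j.+1).[x] + (binom_poly j).[x].
Proof.
rewrite !horner_binom_poly big_ord_recl big_ord_recr /=.
have -> : \prod_(i < j) (x + 1 - (lift ord0 i)%:R) = \prod_(i < j) (x - i%:R).
  by apply: eq_bigr => i _; rewrite lift0 -natr1; ring.
rewrite factS natrM; field.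
by rewrite fact_natr_neq0 nat1r pnatr_eq0.
Qed.

Lemma horner_moser_poly s k x :
  (moser_poly s k).[x] =
  \sum_(1 <= p < s.+1) (-1) ^+ (p - 1) * p%:R ^+ (k - 1) * (binom_poly (s - p)).[x].
Proof. by rewrite /moser_poly horner_sum; apply: eq_bigr => p _; rewrite hornerZ. Qed.

Lemma moser_poly_pascal s k x :
  (moser_poly s.+1 k).[x + 1] = (moser_poly s.+1 k).[x] + (moser_poly s k).[x].
Proof.
rewrite !horner_moser_poly big_nat_recr // [in RHS]big_nat_recr //= subnn.
rewrite binom_poly0 !hornerC addrAC -big_split /=; congr (_ + _).
by apply: eq_big_nat => p /andP[_ lt_ps]; rewrite subSn // binom_poly_pascal mulrDr.
Qed.

Lemma horner_moser_poly0 s k :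
  (moser_poly s.+1 k).[0] = (-1) ^+ s * s.+1%:R ^+ (k - 1).
Proof.
rewrite horner_moser_poly big_nat_recr //= subnn binom_poly0 hornerC mulr1 subSS subn0.
rewrite big1_seq ?add0r // => p /andP[_]; rewrite mem_index_iota => /andP[_ lt_ps].
by rewrite subSn // horner_binom_polyS0 mulr0.
Qed.

Definition moser5_closed (s : nat) : {poly rat} :=
  ((((s.-1)`!)%:R : rat)^-1) *:
    (('X ^+ 2 - (((12 * s)%:R - 5) : rat) *: 'X + ((12 * s ^ 2)%:R : rat)%:P)
     * ('X - ((2 * s)%:R : rat)%:P)
     * \prod_(5 <= p < s.+1) ('X - ((p%:R : rat))%:P)).

Lemma horner_moser5_closed s x :
  (moser5_closed s).[x] =
  (s.-1`!%:R)^-1 * ((x ^+ 2 - ((12 * s)%:R - 5) * x + (12 * s ^ 2)%:R)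
                    * (x - (2 * s)%:R) * \prod_(5 <= p < s.+1) (x - p%:R)).
Proof.
rewrite hornerZ !hornerM horner_prod !hornerD ?hornerN hornerZ !hornerC hornerXn hornerX.
by congr (_ * (_ * _ * _)); apply: eq_bigr => i _; rewrite hornerXsubC.
Qed.

Lemma moser5_closed_pascal s x : (4 <= s)%N ->
  (moser5_closed s.+1).[x + 1] = (moser5_closed s.+1).[x] + (moser5_closed s).[x].
Proof.
case: s => // s le4s; rewrite !horner_moser5_closed /=.
rewrite big_nat_recl; last by lia.
rewrite [in X in _ = X + _]big_nat_recr /=; last by lia.
have -> : \prod_(5 <= i < s.+2) (x + 1 - i.+1%:R) = \prod_(5 <= i < s.+2) (x - i%:R).
  by apply: eq_bigr => i _; rewrite -natr1; ring.
set P := \prod_(5 <= i < s.+2) (x - i%:R).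
rewrite factS !natrM ?natrX -[s.+2]addn2 -[s.+1]addn1 !natrD.
by field; rewrite fact_natr_neq0 natr1 pnatr_eq0.
Qed.

Lemma prod_neg_natr_from5 u :
  \prod_(5 <= p < u.+4.+1) (0 - p%:R) = (-1) ^+ u * ((u.+4)`!)%:R / 24 :> rat.
Proof.
elim: u => [|u IH]; first by rewrite big_geq // !factS fact0 /=; field.
rewrite big_nat_recr //= IH (factS u.+4) natrM exprS -[u.+4.+1]addn1 -[u.+4]addn4 !natrD.
by field.
Qed.

Lemma horner_moser5_closed0 u :
  (moser5_closed u.+4).[0] = (-1) ^+ u.+3 * u.+4%:R ^+ 4.
Proof.
rewrite horner_moser5_closed prod_neg_natr_from5 (factS u.+3) [(u.+4 * _)%:R]natrM.
have := fact_natr_neq0 u.+3; set F := (u.+3`!)%:R => F_neq0.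
rewrite [(12 * _ ^ _)%:R]natrM natrX [(2 * _)%:R]natrM !exprS.
by field.
Qed.

Lemma moser_poly4_closed x : (moser_poly 4 5).[x] = (moser5_closed 4).[x].
Proof.
rewrite horner_moser_poly horner_moser5_closed big_geq // mulr1.
rewrite big_ltn // big_ltn // big_ltn // big_ltn // big_geq // !horner_binom_poly /=.
by rewrite !big_ord_recr !big_ord0 /= !factS fact0 /=; field.
Qed.

Theorem mainTheorem8 (s : nat) (hs : (4 <= s)%N) :
  moser_poly s 5 =
  ((((s.-1)`!)%:R : rat)^-1) *:
    (('X ^+ 2 - (((12 * s)%:R - 5) : rat) *: 'X + ((12 * s ^ 2)%:R : rat)%:P)
     * ('X - ((2 * s)%:R : rat)%:P)
     * \prod_(5 <= p < s.+1) ('X - ((p%:R : rat))%:P)).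
Proof.
apply: poly_eq_on_nat => n.
apply: (@pascal_eq_on_nat _ (fun s => horner (moser_poly s 5))
                            (fun s => horner (moser5_closed s)) 4) => //.
- by move=> t x _; exact: moser_poly_pascal.
- by move=> t x; exact: moser5_closed_pascal.
- by move=> m; exact: moser_poly4_closed.
- case=> // t lt4t; have [u ->] : exists u, t = u.+4 by exists (t - 4)%N; lia.
  by rewrite horner_moser_poly0 horner_moser5_closed0.
Qed.
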